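(* Let $F$, $G$, $\Sigma_A$, $\pi$, $C$, $R$ be as in the context. For $\omega\in\Sigma_A$ let $I_\omega:=\bigcap_{n\ge1}g_{\omega_{-1}}\circ\cdots\circ g_{\omega_{-n}}(I)$ and for $\xi\in\Sigma_N$ let $I_\xi:=\bigcap_{n\ge1}f_{\xi_{-1}}\circ\cdots\circ f_{\xi_{-n}}(I)$. Then $I_\omega=I_{\pi(\omega)}$ for every $\omega\in C$ and $I_\omega=R(I_{\pi(\omega)})$ for every $\omega\in\Sigma_A\setminus C$.
   Context: $I=[0,1]$, $R(x)=1-x$. $F(\xi,p)=(\sigma(\xi),f_{\xi_0}(p))$ on $\Sigma_N\times I$, $\Sigma_N=\{1,\ldots,N\}^{\mathbb Z}$, with $f_i$ $C^1$-diffeomorphisms onto their images. $\mathcal I_P$ / $\mathcal I_R$: indices of orientation preserving / reversing $f_i$. $A=(a_{ij})_{i,j=1}^{2N}$ with $a_{ij}=1$ if ($i\in\mathcal I_P$, $j\le N$), or ($i\in\mathcal I_R$, $j>N$), or ($i-N\in\mathcal I_P$, $j>N$), or ($i-N\in\mathcal I_R$, $j\le N$), else $0$; $\Sigma_A$ the $A$-admissible bi-infinite sequences in $\{1,\ldots,2N\}$ with shift $\sigma_A$; $\pi(\omega)_n=\overline{\omega_n}$ where $\overline i=i$ for $i\le N$, $\overline i=i-N$ for $i>N$. $G(\omega,x)=(\sigma_A(\omega),g_{\omega_0}(x))$ with $g_i=f_i$, $g_{i+N}=R\circ f_i\circ R$ for $i\in\mathcal I_P$, and $g_i=R\circ f_i$,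 $g_{i+N}=f_i\circ R$ for $i\in\mathcal I_R$. $C=\{\omega\in\Sigma_A\colon\omega_0\le N\}$. *)

From Stdlib Require Import Reals Lra Lia ZArith Arith ClassicalEpsilon.
Open Scope R_scope.

Definition inI (x : R) : Prop := 0 <= x <= 1.

Definition Rfl (x : R) : R := 1 - x.

(* f is a C^1 diffeomorphism of I onto its image f(I), with f(I) included in I:
   f maps I into I, is injective on I, has a derivative df (one-sided at the
   endpoints, i.e. the limit of difference quotients taken within I) which is
   continuous on I and nowhere zero on I (so the inverse is C^1 as well). *)
Definition C1_diffeo_into_I (f : R -> R) : Prop :=
  (forall x, inI x -> inI (f x)) /\
  (forall x y, inI x -> inI y -> f x = f y -> x = y) /\
  exists df : R -> R,
    (forall x, inI x ->
       limit1_in (fun y => (f y - f x) / (y - x)) (fun y => inI y /\ y <> x) (df x) x) /\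
    (forall x, inI x -> limit1_in df inI (df x) x) /\
    (forall x, inI x -> df x <> 0).

Definition orient_pres (f : R -> R) : Prop :=
  forall x y, inI x -> inI y -> x < y -> f x < f y.
Definition orient_rev (f : R -> R) : Prop :=
  forall x y, inI x -> inI y -> x < y -> f y < f x.

Definition inIP (N : nat) (f : nat -> R -> R) (i : nat) : Prop :=
  (1 <= i <= N)%nat /\ orient_pres (f i).
Definition inIR (N : nat) (f : nat -> R -> R) (i : nat) : Prop :=
  (1 <= i <= N)%nat /\ orient_rev (f i).

(* the transition matrix A, entries a_{ij} = 1, for i, j in {1,...,2N} *)
Definition a_one (N : nat) (f : nat -> R -> R) (i j : nat) : Prop :=
  (1 <= i <= 2 * N)%nat /\ (1 <= j <= 2 * N)%nat /\
  ( (inIP N f i /\ (j <= N)%nat)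
  \/ (inIR N f i /\ (N < j)%nat)
  \/ ((N < i)%nat /\ inIP N f (i - N) /\ (N < j)%nat)
  \/ ((N < i)%nat /\ inIR N f (i - N) /\ (j <= N)%nat)).

Definition in_SigmaN (N : nat) (xi : Z -> nat) : Prop :=
  forall n : Z, (1 <= xi n <= N)%nat.

Definition in_SigmaA (N : nat) (f : nat -> R -> R) (w : Z -> nat) : Prop :=
  forall n : Z, a_one N f (w n) (w (n + 1)%Z).

Definition bar (N i : nat) : nat := if Nat.leb i N then i else (i - N)%nat.
Definition pi_proj (N : nat) (w : Z -> nat) : Z -> nat := fun n => bar N (w n).

Definition g_map (N : nat) (f : nat -> R -> R) (i : nat) : R -> R :=
  if Nat.leb i N then
    (if excluded_middle_informative (orient_pres (f i))
     then f i
     else fun x => Rfl (f i x))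
  else
    (if excluded_middle_informative (orient_pres (f (i - N)%nat))
     then fun x => Rfl (f (i - N)%nat (Rfl x))
     else fun x => f (i - N)%nat (Rfl x)).

(* backward composition h_{s_{-1}} o ... o h_{s_{-n}} *)
Fixpoint back_comp (h : nat -> R -> R) (s : Z -> nat) (n : nat) : R -> R :=
  match n with
  | O => fun x => x
  | S m => fun x => back_comp h s m (h (s (- Z.of_nat (S m))%Z) x)
  end.

(* I_s := bigcap_{n >= 1} h_{s_{-1}} o ... o h_{s_{-n}} (I), as a predicate *)
Definition fiber (h : nat -> R -> R) (s : Z -> nat) (x : R) : Prop :=
  forall n : nat, (1 <= n)%nat -> exists y, inI y /\ x = back_comp h s n y.

(* Write t_k for "ω_k > N" and R^t for R if t holds, the identity otherwise.
   Admissibility says exactly that t_{k+1} = t_k when f_{π(ω)_k} preserves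
   orientation and t_{k+1} ≠ t_k when it reverses it, so in every case
   g_{ω_k} = R^{t_{k+1}} ∘ f_{π(ω)_k} ∘ R^{t_k}.  In a backward composition the
   inner reflections cancel, leaving
   g_{ω_{-1}} ∘ ⋯ ∘ g_{ω_{-n}} = R^{t_0} ∘ f_{π(ω)_{-1}} ∘ ⋯ ∘ f_{π(ω)_{-n}} ∘ R^{t_{-n}},
   and R^{t_{-n}} maps I onto I.  Hence I_ω = R^{t_0}(I_{π(ω)}).  Only the
   orientation of the f_i matters. *)

From Stdlib Require Import Reals ZArith Arith.
From Stdlib Require Import Lra Lia ClassicalEpsilon.
Open Scope R_scope.

Definition Rfl_if (b : bool) (x : R) : R := if b then Rfl x else x.

Lemma RflK x : Rfl (Rfl x) = x.
Proof. unfold Rfl; ring. Qed.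

Lemma Rfl_ifK b x : Rfl_if b (Rfl_if b x) = x.
Proof. destruct b; [apply RflK | reflexivity]. Qed.

Lemma inI_Rfl_if b x : inI x -> inI (Rfl_if b x).
Proof. destruct b; unfold Rfl_if, Rfl, inI; lra. Qed.

Lemma orient_pres_not_rev (h : R -> R) : orient_pres h -> ~ orient_rev h.
Proof.
  intros Hpres Hrev.
  assert (H0 : inI 0) by (unfold inI; lra).
  assert (H1 : inI 1) by (unfold inI; lra).
  specialize (Hpres 0 1 H0 H1 ltac:(lra)).
  specialize (Hrev 0 1 H0 H1 ltac:(lra)).
  lra.
Qed.

Definition barred (N i : nat) : bool := negb (Nat.leb i N).

Lemma a_one_orient_pres {N f i j} :
  a_one N f i j -> (orient_pres (f (bar N i)) <-> barred N i = barred N j).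
Proof.
  unfold barred, bar, inIP, inIR.
  intros (_ & _ & [((Hi & Hp) & Hj) | [((Hi & Hr) & Hj) |
                   [(Hi & (_ & Hp) & Hj) | (Hi & (_ & Hr) & Hj)]]]).
  - replace (Nat.leb i N) with true by (symmetry; apply Nat.leb_le; lia).
    replace (Nat.leb j N) with true by (symmetry; apply Nat.leb_le; lia).
    tauto.
  - replace (Nat.leb i N) with true by (symmetry; apply Nat.leb_le; lia).
    replace (Nat.leb j N) with false by (symmetry; apply Nat.leb_gt; lia).
    split; [intros Hp; exfalso; exact (orient_pres_not_rev _ Hp Hr) | discriminate].
  - replace (Nat.leb i N) with false by (symmetry; apply Nat.leb_gt; lia).
    replace (Nat.leb j N) with false by (symmetry; apply Nat.leb_gt; lia).
    tauto.
  - replace (Nat.leb i N) with false by (symmetry; apply Nat.leb_gt; lia).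
    replace (Nat.leb j N) with true by (symmetry; apply Nat.leb_le; lia).
    split; [intros Hp; exfalso; exact (orient_pres_not_rev _ Hp Hr) | discriminate].
Qed.

Lemma g_map_conj {N f i j} x : a_one N f i j ->
  g_map N f i x = Rfl_if (barred N j) (f (bar N i) (Rfl_if (barred N i) x)).
Proof.
  intros Hij. pose proof (a_one_orient_pres Hij) as Hpres.
  revert Hpres. unfold g_map, bar, barred, Rfl_if.
  destruct (Nat.leb i N), (Nat.leb j N); cbn;
    destruct excluded_middle_informative as [Hp | Hnp]; intros Hpres;
    solve [reflexivity | now apply Hpres in Hp | now destruct Hnp; apply Hpres].
Qed.

Section Fibers.

Variables (N : nat) (f : nat -> R -> R) (w : Z -> nat).
Hypothesis Hw : in_SigmaA N f w.

Let t (k : Z) : bool := barred N (w k).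

Lemma back_comp_g_map n x :
  back_comp (g_map N f) w n x =
  Rfl_if (t 0) (back_comp f (pi_proj N w) n (Rfl_if (t (- Z.of_nat n)) x)).
Proof.
  revert x; induction n as [|n IH]; intros x; cbn [back_comp].
  - now rewrite Rfl_ifK.
  - rewrite IH, (g_map_conj _ (Hw _)).
    replace (- Z.of_nat (S n) + 1)%Z with (- Z.of_nat n)%Z by lia.
    now rewrite Rfl_ifK.
Qed.

Lemma fiber_g_map x :
  fiber (g_map N f) w x <-> fiber f (pi_proj N w) (Rfl_if (t 0) x).
Proof.
  unfold fiber; split; intros Hx n Hn; destruct (Hx n Hn) as [y [Hy Hxy]];
    exists (Rfl_if (t (- Z.of_nat n)) y); (split; [now apply inI_Rfl_if |]).
  - now rewrite Hxy, back_comp_g_map, !Rfl_ifK.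
  - now rewrite back_comp_g_map, Rfl_ifK, <- Hxy, Rfl_ifK.
Qed.

End Fibers.

Theorem lemma3p7 (N : nat) (f : nat -> R -> R)
  (hdiff : forall i, (1 <= i <= N)%nat -> C1_diffeo_into_I (f i)) :
  forall w : Z -> nat, in_SigmaA N f w ->
    ((w 0%Z <= N)%nat ->
       forall x, fiber (g_map N f) w x <-> fiber f (pi_proj N w) x) /\
    (~ (w 0%Z <= N)%nat ->
       forall x, fiber (g_map N f) w x <->
         exists y, fiber f (pi_proj N w) y /\ x = Rfl y).
Proof.
  intros w Hw; split; intros Hw0 x; rewrite (fiber_g_map N f w Hw); unfold barred.
  - now rewrite (proj2 (Nat.leb_le _ _) Hw0).
  - rewrite (proj2 (Nat.leb_gt _ _) (proj1 (Nat.nle_gt _ _) Hw0)); cbn.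
    split; [intros Hx; exists (Rfl x); now rewrite RflK |].
    now intros [y [Hy ->]]; rewrite RflK.
Qed.
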